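(* Consider the $1$-center problem in $\mathbb{R}^1$ where object $i$ has its own maximum speed $v_i>0$. Let $v_M=\max_i v_i$ and $v_m=\min_i v_i$. There is an absolute constant $C$ such that on every instance $I$ with $n$ objects, the measure of the Round-robin strategy is at most $C\,\frac{v_M n}{v_m}\cdot \mathrm{OPT}(I)$.
   Context: Setting. There are $n\ge 2$ objects in $\mathbb{R}^d$; object $i$ follows a trajectory $p_i:[0,\infty)\to\mathbb{R}^d$ with $|p_i(t)-p_i(s)|\le v_i|t-s|$ for all $s,t$, where $v_i>0$ is a known speed bound for object $i$. The initial positions $p_i(0)$ are known. A query strategy queries one object at each time $t=1,2,3,\dots$; querying object $i$ at time $t$ reveals $p_i(t)$. For $t\ge 0$ let $\tau_i(t)$ be the last time $\le t$ at which object $i$ was queried (or $0$ if never). The uncertainty region of object $i$ at time $t$ is the closed ball $U_i(t)$ of radius $v_i(t-\tau_i(t))$ centered at $p_i(\tau_i(t))$. For a center function $f$ mapping an $n$-tuple of points to a point, the uncertainty region of the center at time $t$ is $\{f(q_1,\dots,q_n): q_i\in U_i(t)\}$. The size of a set is its diameter. The measure of a strategy on an instance is the supremum over $t\in\{1,2,\dots\}$ of the size of the center's uncertainty region at time $t$ (just after the query at time $t$). The optimal measure $\mathrm{OPT}(I)$ of an instance $I$ is the infimum of the measure over all query sequences, which may be chosen with full knowledge of the trajectories. The Round-robin strategy queries objects $1,2,\dots,n,1,2,\dots,n,\dots$ in a fixed cyclic order. Here $d=1$ and the center function is the $1$-center: for $x_1,\dots,x_n\in\mathbb{R}$ it is $(\max_i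 x_i+\min_i x_i)/2$. *)

From HB Require Import structures.
From mathcomp Require Import all_boot all_order all_algebra.
From mathcomp Require Import all_classical all_reals.
From mathcomp Require Import ereal Rstruct.
Set Implicit Arguments. Unset Strict Implicit. Unset Printing Implicit Defensive.
Import Order.TTheory GRing.Theory Num.Theory.
Local Open Scope classical_set_scope.
Local Open Scope ring_scope.

Notation RR := Rdefinitions.R.

(* A query strategy: sigma t is the (index < n of the) object queried at time t >= 1
   (the value at t = 0 is irrelevant). *)

Fixpoint last_query (sigma : nat -> nat) (i : nat) (t : nat) : nat :=
  match t with
  | 0 => 0
  | t'.+1 => if sigma t'.+1 == i then t'.+1 else last_query sigma i t'
  end.

Definition unc_region (n : nat) (p : 'I_n -> RR -> RR) (v : 'I_n -> RR)
  (sigma : nat -> nat) (i : 'I_n) (t : nat) : set RR :=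
  let s := last_query sigma i t in
  [set x | `|x - p i s%:R| <= v i * (t - s)%:R].

Definition center1 (n : nat) (x : 'I_n -> RR) : RR :=
  (sup (range x) + inf (range x)) / 2.

Definition center_region (n : nat) (p : 'I_n -> RR -> RR) (v : 'I_n -> RR)
  (sigma : nat -> nat) (t : nat) : set RR :=
  [set center1 q | q in [set q : 'I_n -> RR | forall i, unc_region p v sigma i t (q i)]].

Definition diam (S : set RR) : \bar RR :=
  ereal_sup [set (`|a - b|)%:E | a in S & b in S].

Definition measure_of (n : nat) (p : 'I_n -> RR -> RR) (v : 'I_n -> RR)
  (sigma : nat -> nat) : \bar RR :=
  ereal_sup [set diam (center_region p v sigma t) | t in [set t : nat | (0 < t)%N]].

Definition valid_strategy (n : nat) (sigma : nat -> nat) : Prop :=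
  forall t, (1 <= t)%N -> (sigma t < n)%N.

Definition OPT (n : nat) (p : 'I_n -> RR -> RR) (v : 'I_n -> RR) : \bar RR :=
  ereal_inf [set measure_of p v sigma | sigma in [set s | valid_strategy n s]].

Definition round_robin (n : nat) : nat -> nat := fun t => (t.-1 %% n)%N.

Definition vmax (n : nat) (v : 'I_n -> RR) : RR := sup (range v).
Definition vmin (n : nat) (v : 'I_n -> RR) : RR := inf (range v).

From HB Require Import structures.
From mathcomp Require Import all_boot all_order all_algebra.
From mathcomp Require Import all_classical all_reals.
From mathcomp Require Import ereal Rstruct.
From mathcomp Require Import lra zify.
Import Order.TTheory GRing.Theory Num.Theory.
Local Open Scope classical_set_scope.
Local Open Scope ring_scope.
Set Implicit Arguments. Unset Strict Implicit.

(* Upper bound: under Round-robin every object has been queried within the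
   last n steps, so each uncertainty interval U_i(t) has radius at most
   vmax * n.  The 1-center (max + min)/2 is 1-Lipschitz for the sup-distance
   of tuples, and two points of U_i(t) are at distance at most twice its
   radius; hence the center's region has diameter <= 2 * vmax * n at every
   time, i.e. the Round-robin measure is <= 2 * vmax * n.
   Lower bound: at time 1 any strategy has queried a single object, so all
   other objects (there are at least n - 1 >= 1 of them) have uncertainty
   radius v_i >= vmin.  Pushing those objects to the right ends resp. the left
   ends of their intervals moves the center by at least vmin, so every
   strategy has measure >= vmin, and OPT >= vmin. *)

Lemma sup_attained (R : realType) (E : set R) (x : R) :
  E x -> ubound E x -> sup E = x.
Proof.
move=> Ex ubx; apply/le_anti/andP; split; first by apply: ge_sup => //; exists x.
by apply: sup_upper_bound => //; split; exists x.
Qed.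

Lemma inf_attained (R : realType) (E : set R) (x : R) :
  E x -> lbound E x -> inf E = x.
Proof.
move=> Ex lbx; rewrite /inf (@sup_attained R _ (- x)) ?opprK //.
by move=> _ [y Ey <-]; rewrite lerN2; apply: lbx.
Qed.

Lemma sup_range_attained (R : realType) n (i0 : 'I_n) (q : 'I_n -> R) :
  exists a, sup (range q) = q a /\ forall j, q j <= q a.
Proof.
have [a _ qa_max] := @arg_maxP _ R _ i0 xpredT q isT.
exists a; split=> [|j]; last exact: qa_max.
by apply: sup_attained; [exists a | move=> _ [j _ <-]; apply: qa_max].
Qed.

Lemma inf_range_attained (R : realType) n (i0 : 'I_n) (q : 'I_n -> R) :
  exists a, inf (range q) = q a /\ forall j, q a <= q j.
Proof.
have [a _ qa_min] := @arg_minP _ R _ i0 xpredT q isT.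
exists a; split=> [|j]; last exact: qa_min.
by apply: inf_attained; [exists a | move=> _ [j _ <-]; apply: qa_min].
Qed.

Lemma center1_lipschitz n (i0 : 'I_n) (q q' : 'I_n -> RR) (D : RR) :
  (forall i, `|q i - q' i| <= D) -> `|center1 q - center1 q'| <= D.
Proof.
move=> close; rewrite /center1.
have [a [-> le_a]] := sup_range_attained i0 q.
have [a' [-> le_a']] := sup_range_attained i0 q'.
have [b [-> ge_b]] := inf_range_attained i0 q.
have [b' [-> ge_b']] := inf_range_attained i0 q'.
have := close a; have := close a'; have := close b; have := close b'.
rewrite !ler_norml => /andP[? ?] /andP[? ?] /andP[? ?] /andP[? ?].
have := le_a a'; have := le_a' a; have := ge_b b'; have := ge_b' b.
by move=> *; apply/andP; split; lra.
Qed.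

(* At least two
   coordinates are needed so that some coordinate actually drops. *)
Lemma center1_shift n (j1 j2 : 'I_n) (q q' : 'I_n -> RR) (k : nat) (m : RR) :
  j1 != j2 ->
  (forall i, q' i <= q i) -> (forall i, val i != k -> q' i + 2 * m <= q i) ->
  m <= center1 q - center1 q'.
Proof.
move=> j12 below drop; rewrite /center1.
have [a [-> le_a]] := sup_range_attained j1 q.
have [a' [-> le_a']] := sup_range_attained j1 q'.
have [b [-> ge_b]] := inf_range_attained j1 q.
have [b' [-> ge_b']] := inf_range_attained j1 q'.
have [ea'|na'] := eqVneq (val a') k; last first.
  by have := drop a' na'; have := le_a a'; have := ge_b' b; have := below b; lra.
have [eb|nb] := eqVneq (val b) k; last first.
  by have := drop b nb; have := ge_b' b; have := le_a a'; have := below a'; lra.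
have {ea' eb} <- : a' = b by apply: val_inj; rewrite ea' eb.
have [j nj] : exists j : 'I_n, val j != k.
  have [e1|] := eqVneq (val j1) k; last by exists j1.
  by exists j2; apply: contra_neq j12 => e2; apply: val_inj; rewrite e1 e2.
by have := drop j nj; have := le_a j; have := ge_b' j; have := below a'; lra.
Qed.

Lemma last_query_ge sigma i t t' :
  (1 <= t')%N -> (t' <= t)%N -> sigma t' = i -> (t' <= last_query sigma i t)%N.
Proof.
move=> t'_pos; elim: t => [|t IH] t'_le queried /=; first by lia.
case: ifP => // /eqP not_queried; apply: IH => //.
by move: t'_le; rewrite leq_eqVlt => /predU1P[et'|//]; rewrite et' in queried.
Qed.

Lemma round_robin_recent n (i : 'I_n) t :
  (t <= last_query (round_robin n) i t + n)%N.
Proof.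
have i_lt := ltn_ord i.
case: t => [|t]; first exact: leq0n.
have [t_lt|i_le] := ltnP t i; first by lia.
pose k := ((t - i) %/ n)%N.
have rem_lt : ((t - i) %% n < n)%N by rewrite ltn_mod; lia.
have split_t := divn_eq (t - i) n.
have queried : round_robin n (i + k * n).+1 = i.
  by rewrite /round_robin /= addnC modnMDl modn_small.
have := @last_query_ge (round_robin n) i t.+1 (i + k * n).+1.
by rewrite -/k in split_t; lia.
Qed.

Lemma dist_in_ball (c x y r : RR) :
  `|x - c| <= r -> `|y - c| <= r -> `|x - y| <= 2 * r.
Proof. by rewrite !ler_norml => /andP[? ?] /andP[? ?]; apply/andP; split; lra. Qed.

Lemma diam_ge (S : set RR) (x y : RR) : S x -> S y -> ((`|x - y|)%:E <= diam S)%E.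
Proof. by move=> Sx Sy; apply: ereal_sup_ubound; exists x => //; exists y. Qed.

Lemma measure_le_radius n (i0 : 'I_n) (p : 'I_n -> RR -> RR) (v : 'I_n -> RR)
    sigma (r : RR) :
  (forall t i, (0 < t)%N -> v i * (t - last_query sigma i t)%:R <= r) ->
  (measure_of p v sigma <= (2 * r)%:E)%E.
Proof.
move=> radius_le.
apply: ge_ereal_sup => _ [t t_pos <-].
apply: ge_ereal_sup => _ [x [q Uq <-] [y [q' Uq' <-] <-]].
rewrite lee_fin; apply: (center1_lipschitz i0) => i.
apply: dist_in_ball (le_trans (Uq i) _) (le_trans (Uq' i) _); exact: radius_le.
Qed.

Lemma round_robin_measure_le n (p : 'I_n -> RR -> RR) (v : 'I_n -> RR) (i0 : 'I_n) :
  (forall i, 0 < v i) ->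
  (measure_of p v (round_robin n) <= (2 * vmax v * n%:R)%:E)%E.
Proof.
move=> v_pos; rewrite -mulrA; apply: (measure_le_radius i0) => t i _.
have [a [vmax_a le_a]] := sup_range_attained i0 v.
apply: ler_pM; [exact: ltW | exact: ler0n | by rewrite /vmax vmax_a | ].
by rewrite ler_nat leq_subLR round_robin_recent.
Qed.

(* Lower bound: with at least two objects, every strategy has measure at least
   vmin, witnessed by the center's uncertainty at time 1. *)
Lemma measure_ge_vmin n (j1 j2 : 'I_n) (p : 'I_n -> RR -> RR) (v : 'I_n -> RR)
    sigma :
  j1 != j2 -> (forall i, 0 < v i) -> ((vmin v)%:E <= measure_of p v sigma)%E.
Proof.
move=> j12 v_pos.
apply: le_ereal_sup_tmp; exists (diam (center_region p v sigma 1)); first by exists 1%N.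
pose s i := last_query sigma i 1.
pose d i := v i * (1 - s i)%:R.
have d_ge0 i : 0 <= d i by apply: mulr_ge0; [exact: ltW | exact: ler0n].
pose hi i := p i (s i)%:R + d i.
pose lo i := p i (s i)%:R - d i.
have in_region (q : 'I_n -> RR) : (forall i, `|q i - p i (s i)%:R| <= d i) ->
    center_region p v sigma 1 (center1 q) by move=> Uq; exists q.
apply: le_trans (diam_ge (in_region hi _) (in_region lo _)); last first.
- by move=> i; rewrite /lo addrAC subrr add0r normrN ger0_norm.
- by move=> i; rewrite /hi addrAC subrr add0r ger0_norm.
rewrite lee_fin; apply: le_trans (ler_norm _).
apply: (center1_shift (k := sigma 1%N) j12) => [i | i not_queried].
  by rewrite /hi /lo; have := d_ge0 i; lra.
have [b [vmin_b ge_b]] := inf_range_attained j1 v.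
rewrite /hi /lo /d /s /= eq_sym (negbTE not_queried) subn0 mulr1 /vmin vmin_b.
by have := ge_b i; lra.
Qed.

Theorem proposition2 :
  exists C : RR,
  forall (n : nat) (v : 'I_n -> RR) (p : 'I_n -> RR -> RR),
    (2 <= n)%N ->
    (forall i, 0 < v i) ->
    (forall i (s t : RR), 0 <= s -> 0 <= t -> `|p i t - p i s| <= v i * `|t - s|) ->
    (measure_of p v (round_robin n) <=
       ((C * vmax v * n%:R / vmin v)%:E * OPT p v)%E)%E.
Proof.
exists 2 => n v p n_ge2 v_pos _.
pose j0 := @Ordinal n 0 (ltnW n_ge2).
pose j1 := @Ordinal n 1 n_ge2.
have opt_ge : ((vmin v)%:E <= OPT p v)%E.
  by apply: le_ereal_inf_tmp => _ [sigma _ <-]; apply: (@measure_ge_vmin _ j0 j1).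
have vmin_pos : 0 < vmin v.
  by have [b [vmin_b _]] := inf_range_attained j0 v; rewrite /vmin vmin_b.
have vmax_pos : 0 < vmax v.
  by have [a [vmax_a _]] := sup_range_attained j0 v; rewrite /vmax vmax_a.
apply: le_trans (round_robin_measure_le p j0 v_pos) _.
rewrite -[X in (X%:E <= _)%E](divfK (lt0r_neq0 vmin_pos)) EFinM.
have n_pos : 0 < n%:R :> RR by rewrite ltr0n; exact: ltnW n_ge2.
have ratio_pos : 0 < 2 * vmax v * n%:R / vmin v.
  by apply: divr_gt0 vmin_pos; apply: mulr_gt0 n_pos; apply: mulr_gt0.
apply: lee_pmul; [by rewrite lee_fin ltW | by rewrite lee_fin ltW | exact: lexx | exact: opt_ge].
Qed.
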